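(* Let $\mathbf{u},\mathbf{v}\in\mathbb{R}^n$ be $k$-sparse unit vectors ($k_{\mathbf{u}}=k_{\mathbf{v}}=k$) following power-law decay profiles with rates $\alpha_{\mathbf{u}},\alpha_{\mathbf{v}}\ge0$, and let $\alpha_{\mathbf{u}\mathbf{v}}=\alpha_{\mathbf{u}}+\alpha_{\mathbf{v}}$. Then, asymptotically in $k$, the sample complexity term $\max_{1\le p\le k} p\, s_{\mathbf{u}}(p)s_{\mathbf{v}}(p)$ governing the Bi-SEP sample size requirement $m\gtrsim \max_{1\le p\le k}p\,s_{\mathbf{u}}(p)s_{\mathbf{v}}(p)\log n$ is of order $k^{\tau}$ with $\tau=\max(1,2-\alpha_{\mathbf{u}\mathbf{v}})$, so the requirement becomes $m\gtrsim k^{\tau}\log n$; except in the boundary case $\{\alpha_{\mathbf{u}},\alpha_{\mathbf{v}}\}=\{0,1\}$, where the term is of order $k\log k$, yielding $m\gtrsim k\log k\log n$.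
   Context: A $k$-sparse unit vector $\mathbf{x}\in\mathbb{R}^n$ follows a power-law decay profile with rate $\alpha\ge0$ if its nonzero entries sorted by magnitude satisfy $x_{(i)}^2\propto i^{-\alpha}$ for $i=1,\dots,k$, normalized so that $\|\mathbf{x}\|_2=1$. Here $x_{(i)}$ denotes the $i$-th largest entry in absolute value. Structure function: $s_{\mathbf{u}}(p)=(\sum_{i=1}^p u_{(i)}^2)^{-1}$, $s_{\mathbf{v}}(p)=(\sum_{i=1}^p v_{(i)}^2)^{-1}$. Bi-SEP is a stagewise SCCA algorithm whose guarantee (under the whitened Gaussian spiked model $\boldsymbol{\Sigma}_{xx}=\boldsymbol{\Sigma}_{yy}=\mathbf{I}_n$, $\boldsymbol{\Sigma}_{xy}=\rho\mathbf{u}\mathbf{v}^\top$) holds when $m\ge C\max_{1\le t\le k}(2t)s_{\mathbf{u}}(t)s_{\mathbf{v}}(t)\log n$ in the balanced case. Notation $a\gtrsim b$ means $a\ge Cb$ for an absolute constant $C>0$; $a\asymp b$ means both directions. *)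

From HB Require Import structures.
From mathcomp Require Import all_boot all_order all_algebra.
From mathcomp Require Import reals exp.
Set Implicit Arguments. Unset Strict Implicit. Unset Printing Implicit Defensive.
Import Order.TTheory GRing.Theory Num.Theory.
Local Open Scope ring_scope.

Section Defs.
Variable R : realType.

(* squared entries of x sorted in nonincreasing order: the i-th item
   (0-based) is x_(i+1)^2 in the paper's notation *)
Definition sorted_sq (n : nat) (x : 'I_n -> R) : seq R :=
  sort (fun a b : R => b <= a) [seq x i ^+ 2 | i <- enum 'I_n].

Definition struct_fun (n : nat) (x : 'I_n -> R) (p : nat) : R :=
  (\sum_(a <- take p (sorted_sq x)) a)^-1.

Definition power_law_profile (n k : nat) (alpha : R) (x : 'I_n -> R) : Prop :=
  [/\ #|[set i | x i != 0]| = k,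
      \sum_i x i ^+ 2 = 1 &
      exists c : R, 0 < c /\
        forall i : nat, (i < k)%N ->
          nth 0 (sorted_sq x) i = c * (i.+1%:R `^ (- alpha))].

Definition bisep_term (n k : nat) (u v : 'I_n -> R) : R :=
  \big[Num.max/0]_(1 <= p < k.+1) (p%:R * struct_fun u p * struct_fun v p).

End Defs.

From mathcomp Require Import all_boot all_order all_algebra.
From mathcomp Require Import reals exp.
From mathcomp Require Import ring lra.

(* Write H_p(a) = sum_{i=1}^p i^-a.  A power-law profile forces
   x_(i)^2 = i^-a / H_k(a), hence s_x(p) = H_k(a) / H_p(a), and the Bi-SEP
   term becomes max_{1<=p<=k} p H_k(a) H_k(b) / (H_p(a) H_p(b)).  The terms
   p = k and p = 1 give the lower bound max(k, k^(2-a-b)) because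
   H_k(a) >= k^(1-a).  For the upper bound, a Bernoulli inequality bounds the
   increments of t^d / d, and telescoping gives
   H_k(a) <= C (k/p)^(max d 0) H_p(a) for every nonzero d in [1-a, 1];
   choosing exponents for a and b whose positive parts add up to at most tau
   bounds every term by C k^tau.  When {a, b} = {0, 1} the term reduces to
   k H_k(1) / H_p(1), maximal at p = 1, and H_k(1) is of order ln k. *)

Set Implicit Arguments.
Unset Strict Implicit.
Unset Printing Implicit Defensive.

Import Order.TTheory GRing.Theory Num.Theory.
Local Open Scope ring_scope.

Section RealFacts.
Variable R : realType.
Implicit Types (x y d r s t u : R).

Lemma powR_le_bernoulli y d : 0 <= y -> 0 < d <= 1 -> y `^ d <= 1 + d * (y - 1).
Proof.
move=> y0 /andP[d0 d1]; have [->|d1'] := eqVneq d 1.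
  by rewrite powRr1 // mul1r addrC subrK.
have dlt1 : d < 1 by rewrite lt_neqAle d1' d1.
have := @conjugate_powR R (y `^ d) 1 d^-1 (1 - d)^-1 (powR_ge0 _ _) ler01.
rewrite !invr_gt0 d0 subr_gt0 dlt1 !invrK addrC subrK => /(_ isT isT erefl).
by rewrite mulr1 powR1 -powRrM mulfV ?gt_eqF // powRr1 // mul1r => ?; lra.
Qed.

Lemma powR_ge_bernoulli y d : 0 < y -> d <= 0 -> 1 + d * (y - 1) <= y `^ d.
Proof.
move=> y0 d0; rewrite /powR (gt_eqF y0); apply: le_trans (expR_ge1Dx _).
have : ln y <= y - 1 by have := @le_ln1Dx R (y - 1); rewrite subrKC; apply; lra.
by move=> lny; rewrite lerD2l ler_wnM2l.
Qed.

Lemma powR_increment_ge x d : 0 < x -> d != 0 -> d <= 1 ->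
  (x + 1) `^ (d - 1) <= ((x + 1) `^ d - x `^ d) / d.
Proof.
move=> x0 d0 d1; have x1 : 0 < x + 1 by lra.
set y := 1 - (x + 1)^-1; have y0 : 0 < y by rewrite subr_gt0 invf_lt1 ?ltrDr.
have xE : x = (x + 1) * y by rewrite mulrBr mulr1 mulfV ?gt_eqF // addrK.
rewrite [in X in _ <= (_ - X) / _]xE (powRM _ (ltW x1) (ltW y0)).
rewrite powRD ?(gt_eqF x1) ?implybT // (powR_inv1 (ltW x1)).
have -> : (x + 1)^-1 = 1 - y by rewrite /y opprB subrKC.
rewrite (_ : _ - _ * y `^ d = (x + 1) `^ d * (1 - y `^ d)); last by ring.
rewrite -mulrA ler_pM2l ?powR_gt0 //.
have [dneg|dpos] := ltP d 0.
- have := @powR_ge_bernoulli y d y0 (ltW dneg).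
  by rewrite ler_ndivlMr //; lra.
- have {}dpos : 0 < d by rewrite lt_neqAle eq_sym d0.
  have := @powR_le_bernoulli y d (ltW y0) (introT andP (conj dpos d1)).
  by rewrite ler_pdivlMr //; lra.
Qed.

Lemma lnB_le x y : 0 < x -> 0 < y -> ln y - ln x <= y / x - 1.
Proof.
move=> x0 y0; rewrite -ln_div ?posrE //.
by have := @le_ln1Dx R (y / x - 1); rewrite subrKC; apply; have := divr_gt0 y0 x0; lra.
Qed.

Lemma le0_ger_powR x y r : 0 < x -> x <= y -> r <= 0 -> y `^ r <= x `^ r.
Proof.
move=> x0 xy r0; rewrite -[r]opprK !(powRN _ (- r)) lef_pV2 ?posrE ?powR_gt0 //.
  by apply: ge0_ler_powR; rewrite ?nnegrE ?oppr_ge0 ?(ltW x0) ?(le_trans (ltW x0)).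
exact: lt_le_trans xy.
Qed.

Lemma powR_ratio_le (p k : nat) r t : (0 < p <= k)%N -> 0 <= r <= t -> 1 <= t ->
  p%:R * (k%:R `^ r / p%:R `^ r) <= k%:R `^ t.
Proof.
move=> /andP[p0 pk] /andP[r0 rt] t1.
have pR0 : 0 < p%:R :> R by rewrite ltr0n.
have kR0 : k%:R != 0 :> R by rewrite pnatr_eq0 -lt0n (leq_trans p0).
have ratio_mono : k%:R `^ r / p%:R `^ r <= k%:R `^ t / p%:R `^ t.
  have [s s0 ->] : exists2 s, 0 <= s & t = r + s.
    by exists (t - r); rewrite ?subr_ge0 // subrKC.
  rewrite !powRD ?kR0 ?(gt_eqF pR0) ?implybT //.
  rewrite invfM mulrACA ler_peMr ?divr_ge0 ?powR_ge0 // ler_pdivlMr ?powR_gt0 // mul1r.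
  by apply: ge0_ler_powR; rewrite ?nnegrE ?ler0n ?ler_nat.
apply: (le_trans (ler_wpM2l (ler0n _ _) ratio_mono)).
rewrite mulrCA ger_pMr ?powR_gt0 ?ltr0n ?(leq_trans p0) // ler_pdivrMr ?powR_gt0 // mul1r.
by apply: le1r_powR; rewrite // ler1n.
Qed.

Lemma max0D_le x y s t u : x <= s -> y <= t -> 0 <= s -> 0 <= t -> s + t <= u ->
  Num.max x 0 + Num.max y 0 <= u.
Proof. by move=> xs yt s0 t0; apply: le_trans; rewrite lerD // ge_max ?xs ?yt ?s0 ?t0. Qed.

End RealFacts.

Section Harmonic.
Variable R : realType.
Implicit Types (a d : R) (p k : nat).

Definition harmonic p a : R := \sum_(0 <= i < p) i.+1%:R `^ (- a).

Lemma harmonic_ge0 p a : 0 <= harmonic p a.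
Proof. by apply: sumr_ge0 => i _; apply: powR_ge0. Qed.

Lemma harmonic_ge1 p a : (0 < p)%N -> 1 <= harmonic p a.
Proof.
by move=> p0; rewrite /harmonic big_ltn // powR1 lerDl sumr_ge0 // => i _; apply: powR_ge0.
Qed.

Lemma harmonic_gt0 p a : (0 < p)%N -> 0 < harmonic p a.
Proof. by move=> p0; exact: lt_le_trans ltr01 (harmonic_ge1 a p0). Qed.

Lemma harmonic0 p : harmonic p 0 = p%:R.
Proof.
rewrite /harmonic (eq_bigr (fun=> 1)) => [|i _]; last by rewrite oppr0 powRr0.
by rewrite sumr_const_nat subn0.
Qed.

Lemma powR_le_harmonic p a : 0 <= a -> (0 < p)%N -> p%:R `^ (1 - a) <= harmonic p a.
Proof.
move=> a0 p0; have pR0 : 0 < p%:R :> R by rewrite ltr0n.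
rewrite powRD ?(gt_eqF pR0) ?implybT // powRr1 ?ler0n // mulr_natl.
rewrite -[in X in X <= _](subn0 p) -sumr_const_nat.
apply: ler_sum_nat => i; rewrite subn0 => /andP[_ ip].
by apply: le0_ger_powR; [exact: ltr0Sn | rewrite ler_nat | lra].
Qed.

Lemma ln_le_harmonic1 k : ln k.+1%:R <= harmonic k 1.
Proof.
have -> : ln k.+1%:R = \sum_(0 <= i < k) (ln i.+2%:R - ln i.+1%:R) :> R.
  by rewrite telescope_sumr // ln1 subr0.
apply: ler_sum_nat => i _; rewrite powR_inv1 ?ler0n //.
apply: le_trans (lnB_le (ltr0Sn _ _) (ltr0Sn _ _)) _.
by rewrite -[i.+2%:R]natr1 mulrDl mulfV ?pnatr_eq0 // mul1r addrAC subrr add0r.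
Qed.

Lemma harmonic1_le k : (0 < k)%N -> harmonic k 1 <= 1 + ln k%:R.
Proof.
move=> k0; rewrite /harmonic big_ltn // powR1 lerD2l.
have -> : ln k%:R = \sum_(1 <= i < k) (ln i.+1%:R - ln i%:R) :> R.
  by rewrite telescope_sumr // ln1 subr0.
apply: ler_sum_nat => i /andP[i1 _]; rewrite powR_inv1 ?ler0n //.
have i0 : 0 < i%:R :> R by rewrite ltr0n.
have := lnB_le (ltr0Sn R i) i0; rewrite -[i.+1%:R]natr1.
suff -> : i%:R / (i%:R + 1) - 1 = - (i%:R + 1 : R)^-1 by lra.
by field; apply: lt0r_neq0; lra.
Qed.

Lemma harmonic1_ln_bounds k : (2 <= k)%N ->
  ln k%:R <= harmonic k (1 : R) <= 3 * ln k%:R.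
Proof.
move=> k2; have k0 : (0 < k)%N by apply: leq_trans k2.
have lnk : ln 2 <= ln k%:R :> R by rewrite ler_ln ?posrE ?ltr0n ?ler_nat.
have ln2 : 2^-1 <= ln 2 :> R.
  by have := lnB_le (@ltr0n R 2) ltr01; rewrite ln1 mul1r; lra.
apply/andP; split.
- by apply: le_trans _ (ln_le_harmonic1 k); rewrite ler_ln ?posrE ?ltr0n ?ler_nat.
- by apply: le_trans (harmonic1_le k0) _; lra.
Qed.

Lemma harmonic_tail_le a d p k : d != 0 -> d <= 1 -> 1 - a <= d -> (0 < p <= k)%N ->
  \sum_(p <= i < k) i.+1%:R `^ (- a)
    <= p%:R `^ (1 - a) * (k%:R `^ Num.max d 0 / p%:R `^ Num.max d 0) / `|d|.
Proof.
move=> d0 d1 ad /andP[p0 pk]; have pR0 : 0 < p%:R :> R by rewrite ltr0n.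
have split_exp : \sum_(p <= i < k) i.+1%:R `^ (- a)
    <= p%:R `^ (1 - a - d) * \sum_(p <= i < k) i.+1%:R `^ (d - 1).
  rewrite mulr_sumr; apply: ler_sum_nat => i /andP[pi _].
  have -> : i.+1%:R `^ (- a) = i.+1%:R `^ (d - 1) * i.+1%:R `^ (1 - a - d) :> R.
    by rewrite -powRD ?pnatr_eq0 ?implybT //; congr (_ `^ _); ring.
  rewrite mulrC ler_wpM2r ?powR_ge0 //.
  by apply: le0_ger_powR => //; [rewrite ler_nat ltnW | lra].
have telescope : \sum_(p <= i < k) i.+1%:R `^ (d - 1) <= (k%:R `^ d - p%:R `^ d) / d.
  rewrite mulrBl -(telescope_sumr (fun i => i%:R `^ d / d) pk).
  apply: ler_sum_nat => i /andP[pi _]; rewrite -mulrBl -natr1.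
  by apply: powR_increment_ge; rewrite // ltr0n (leq_trans p0).
apply: (le_trans split_exp); rewrite powRB ?(gt_eqF pR0) ?implybT //.
apply: le_trans (ler_wpM2l _ telescope) _; first by rewrite divr_ge0 ?powR_ge0.
set P := p%:R `^ (1 - a); set D := p%:R `^ d; set K := k%:R `^ d.
have D0 : 0 < D by rewrite powR_gt0.
have K0 : 0 <= K by rewrite powR_ge0.
have PD0 : 0 <= P / D by rewrite divr_ge0 ?powR_ge0 ?ltW.
have [dneg|dpos] := ltP d 0.
- rewrite !powRr0 divr1 mulr1 ltr0_norm //.
  have -> : (K - D) / d = (D - K) / - d by field.
  have -> : P / - d = P / D * (D / - d) by field; rewrite d0 gt_eqF.
  by rewrite ler_wpM2l // ler_wpM2r ?invr_ge0 ?oppr_ge0 ?(ltW dneg) // gerBl.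
- have {}dpos : 0 < d by rewrite lt_neqAle eq_sym d0.
  rewrite -/K -/D gtr0_norm // (_ : P * (K / D) / d = P / D * (K / d)); last by ring.
  by rewrite ler_wpM2l // ler_wpM2r ?invr_ge0 ?(ltW dpos) // gerBl (ltW D0).
Qed.

Lemma harmonic_ratio_le a d p k :
  0 <= a -> d != 0 -> d <= 1 -> 1 - a <= d -> (0 < p <= k)%N ->
  harmonic k a
    <= (1 + `|d|^-1) * (k%:R `^ Num.max d 0 / p%:R `^ Num.max d 0) * harmonic p a.
Proof.
move=> a0 d0 d1 ad /andP[p0 pk].
rewrite /harmonic (big_cat_nat (leq0n p) pk) -/(harmonic p a) /=.
have := harmonic_tail_le d0 d1 ad (introT andP (conj p0 pk)).
set Q := k%:R `^ _ / _ => tail.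
have Q1 : 1 <= Q.
  rewrite ler_pdivlMr ?powR_gt0 ?ltr0n // mul1r.
  by apply: ge0_ler_powR; rewrite ?nnegrE ?ler0n ?le_max ?lexx ?orbT // ler_nat.
have Hp := powR_le_harmonic a0 p0; have Hp0 := harmonic_gt0 a p0.
have dV0 : 0 <= `|d|^-1 by rewrite invr_ge0.
apply: le_trans (lerD (lexx _) tail) _.
rewrite mulrDl mul1r mulrDl lerD ?ler_peMl ?(ltW Hp0) //.
rewrite mulrAC mulrC (_ : `|d|^-1 * Q * _ = Q * (harmonic p a / `|d|)); last by ring.
by rewrite ler_wpM2l ?(le_trans ler01 Q1) // ler_wpM2r.
Qed.

End Harmonic.

Section PowerLawProfile.
Variable R : realType.

Lemma big_take_count_neq0 (s : seq R) k :
  count (predC1 0) s = k -> (forall i, (i < k)%N -> nth 0 s i != 0) ->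
  \sum_(y <- take k s) y = \sum_(y <- s) y.
Proof.
move=> cnt nz; have ks : (k <= size s)%N by rewrite -cnt count_size.
have cnt_take : count (predC1 0) (take k s) = k.
  apply/eqP; rewrite -[X in _ == X](size_takel ks) -all_count.
  by apply/(all_nthP 0) => i; rewrite size_takel // => ik; rewrite nth_take //; apply: nz.
have : ~~ has (predC1 0) (drop k s).
  rewrite has_count -leqNgt leqn0 -(eqn_add2l k) addn0.
  by rewrite -{1}cnt_take -count_cat cat_take_drop cnt.
move/hasPn => drop0; rewrite -[in RHS](cat_take_drop k s) big_cat /=.
by rewrite [X in _ = _ + X]big1_seq ?addr0 // => y /andP[_ /drop0]; rewrite negbK => /eqP.
Qed.

Variables (n : nat) (x : 'I_n -> R).

Lemma perm_sorted_sq : perm_eq (sorted_sq x) [seq x i ^+ 2 | i <- enum 'I_n].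
Proof. by rewrite /sorted_sq perm_sort. Qed.

Lemma size_sorted_sq : size (sorted_sq x) = n.
Proof. by rewrite (perm_size perm_sorted_sq) size_map size_enum_ord. Qed.

Lemma sum_sorted_sq : \sum_(y <- sorted_sq x) y = \sum_i x i ^+ 2.
Proof. by rewrite (perm_big _ perm_sorted_sq) big_map big_enum. Qed.

Lemma count_sorted_sq_neq0 : count (predC1 0) (sorted_sq x) = #|[set i | x i != 0]|.
Proof.
rewrite (permP perm_sorted_sq) count_map cardE /enum_mem size_filter count_filter.
by apply: eq_count => i; rewrite /= !inE sqrf_eq0 andbT.
Qed.

Lemma struct_fun_power_law k a : power_law_profile k a x ->
  forall p, (p <= k)%N -> struct_fun x p = harmonic k a / harmonic p a.
Proof.
case=> card sumsq [c [c0 nth_sq]].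
have kn : (k <= n)%N.
  by rewrite -card -count_sorted_sq_neq0 -[X in (_ <= X)%N]size_sorted_sq count_size.
have sum_take p : (p <= k)%N -> \sum_(y <- take p (sorted_sq x)) y = c * harmonic p a.
  move=> pk; rewrite (big_nth 0) size_takel ?size_sorted_sq ?(leq_trans pk) //.
  rewrite /harmonic mulr_sumr; apply: eq_big_nat => i /andP[_ ip].
  by rewrite nth_take // nth_sq // (leq_trans ip pk).
have cH : c * harmonic k a = 1.
  rewrite -sum_take // big_take_count_neq0 ?sum_sorted_sq ?count_sorted_sq_neq0 // => i ik.
  by rewrite nth_sq // mulf_neq0 ?gt_eqF ?powR_gt0 ?ltr0Sn.
have cV : c^-1 = harmonic k a by rewrite -[c^-1]mulr1 -cH mulKf ?gt_eqF.
by move=> p pk; rewrite /struct_fun sum_take // invfM cV mulrC.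
Qed.

End PowerLawProfile.

Section BisepTerm.
Variable R : realType.
Implicit Types (a b d M tau : R) (p k : nat).

Definition harmonic_bisep k a b : R :=
  \big[Num.max/0]_(1 <= p < k.+1)
    (p%:R * (harmonic k a / harmonic p a) * (harmonic k b / harmonic p b)).

Lemma bisep_term_power_law n k a b (u v : 'I_n -> R) :
  power_law_profile k a u -> power_law_profile k b v -> bisep_term k u v = harmonic_bisep k a b.
Proof.
move=> hu hv; apply: eq_big_nat => p /andP[_ pk].
by rewrite (struct_fun_power_law hu) ?(struct_fun_power_law hv).
Qed.

Lemma le_harmonic_bisep k a b p : (1 <= p <= k)%N ->
  p%:R * (harmonic k a / harmonic p a) * (harmonic k b / harmonic p b) <= harmonic_bisep k a b.
Proof. by move=> pk; apply: (@bigmax_sup_seq _ _ _ _ _ p); rewrite ?mem_index_iota ?ltnS. Qed.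

Lemma harmonic_bisep_le k a b M : 0 <= M -> (forall p, (1 <= p <= k)%N ->
    p%:R * (harmonic k a / harmonic p a) * (harmonic k b / harmonic p b) <= M) ->
  harmonic_bisep k a b <= M.
Proof.
move=> M0 hM; rewrite /harmonic_bisep big_seq; apply: bigmax_le => // p.
by rewrite mem_index_iota ltnS; apply: hM.
Qed.

Lemma powR_le_harmonic_bisep k a b : 0 <= a -> 0 <= b -> (0 < k)%N ->
  k%:R `^ Num.max 1 (2 - (a + b)) <= harmonic_bisep k a b.
Proof.
move=> a0 b0 k0; have Hk0 c := gt_eqF (harmonic_gt0 c k0).
have [_|_] := leP (2 - (a + b)) 1.
- apply: le_trans (le_harmonic_bisep a b (p := k) _); last by rewrite k0 /=.
  by rewrite !divff ?Hk0 // !mulr1 powRr1 ?ler0n.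
- apply: le_trans (le_harmonic_bisep a b (p := 1) k0).
  rewrite /harmonic !big_nat1 !powR1 !divr1 mul1r.
  rewrite (_ : 2 - (a + b) = (1 - a) + (1 - b)); last by ring.
  rewrite powRD ?pnatr_eq0 -?lt0n ?k0 ?implybT //.
  by apply: ler_pM; rewrite ?powR_ge0 ?powR_le_harmonic.
Qed.

Lemma harmonic_bisep_le_powR k a b da db tau : 0 <= a -> 0 <= b ->
  da != 0 -> da <= 1 -> 1 - a <= da -> db != 0 -> db <= 1 -> 1 - b <= db ->
  Num.max da 0 + Num.max db 0 <= tau -> 1 <= tau ->
  harmonic_bisep k a b <= (1 + `|da|^-1) * (1 + `|db|^-1) * k%:R `^ tau.
Proof.
move=> a0 b0 da0 da1 ada db0 db1 bdb exps t1.
set Ca := 1 + _; set Cb := 1 + _.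
have Ca0 : 0 <= Ca by rewrite addr_ge0 ?invr_ge0.
have Cb0 : 0 <= Cb by rewrite addr_ge0 ?invr_ge0.
apply: harmonic_bisep_le; first by rewrite !mulr_ge0 ?powR_ge0.
move=> p /andP[p0 pk]; have pk' : (0 < p <= k)%N by rewrite p0.
have ratio c d : 0 <= c -> d != 0 -> d <= 1 -> 1 - c <= d ->
    harmonic k c / harmonic p c
      <= (1 + `|d|^-1) * (k%:R `^ Num.max d 0 / p%:R `^ Num.max d 0).
  by move=> *; rewrite ler_pdivrMr ?harmonic_gt0 ?harmonic_ratio_le.
have ratio_a := ratio a da a0 da0 da1 ada; have ratio_b := ratio b db b0 db0 db1 bdb.
apply: le_trans (ler_pM _ _ (ler_wpM2l (ler0n _ _) ratio_a) ratio_b) _;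
  rewrite ?mulr_ge0 ?divr_ge0 ?invr_ge0 ?ler0n ?harmonic_ge0 //.
rewrite -/Ca -/Cb; set ea := Num.max da 0; set eb := Num.max db 0.
have kR0 : k%:R != 0 :> R by rewrite pnatr_eq0 -lt0n (leq_trans p0).
have pR0 : p%:R != 0 :> R by rewrite pnatr_eq0 -lt0n.
have -> : p%:R * (Ca * (k%:R `^ ea / p%:R `^ ea)) * (Cb * (k%:R `^ eb / p%:R `^ eb))
    = Ca * Cb * (p%:R * (k%:R `^ (ea + eb) / p%:R `^ (ea + eb))).
  by rewrite !powRD ?kR0 ?pR0 ?implybT //; field; rewrite !gt_eqF ?powR_gt0 ?ltr0n.
rewrite ler_wpM2l ?mulr_ge0 // powR_ratio_le //.
by rewrite addr_ge0 ?le_max ?lexx ?orbT.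
Qed.

Lemma harmonic_bisep_boundary k a b : ((a == 0) && (b == 1)) || ((a == 1) && (b == 0)) ->
  (0 < k)%N -> harmonic_bisep k a b = k%:R * harmonic k 1.
Proof.
move=> ab k0; have Hk0 := harmonic_ge0 k (1 : R).
have term p : (0 < p <= k)%N ->
    p%:R * (harmonic k a / harmonic p a) * (harmonic k b / harmonic p b)
      = k%:R * harmonic k 1 / harmonic p 1.
  case/andP=> p0 _; have Hp0 := lt0r_neq0 (harmonic_gt0 (1 : R) p0).
  have pR0 : p%:R != 0 :> R by rewrite pnatr_eq0 -lt0n.
  by case/orP: ab => /andP[/eqP-> /eqP->]; rewrite !harmonic0; field; rewrite Hp0 pR0.
apply/le_anti/andP; split.
- apply: harmonic_bisep_le => [|p /andP[p0 pk]]; first by rewrite mulr_ge0 ?ler0n.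
  rewrite term ?p0 // ler_pdivrMr ?harmonic_gt0 //.
  by apply: ler_peMr; [rewrite mulr_ge0 ?ler0n | rewrite harmonic_ge1].
- apply: le_trans (le_harmonic_bisep a b (p := 1) k0).
  by rewrite term // /harmonic big_nat1 powR1 divr1.
Qed.

(* In the boundary case the vector with rate 1 would need the exponent 0,
   for which the ratio bound of harmonic_ratio_le degenerates into ln k. *)
Lemma exists_ratio_exponents a b : 0 <= a -> 0 <= b ->
  ~~ (((a == 0) && (b == 1)) || ((a == 1) && (b == 0))) ->
  exists da db,
    [/\ [/\ da != 0, da <= 1 & 1 - a <= da], [/\ db != 0, db <= 1 & 1 - b <= db]
      & Num.max da 0 + Num.max db 0 <= Num.max 1 (2 - (a + b))].
Proof.
wlog ab : a b / a <= b => [wlog a0 b0 nb|a0 b0 nb].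
  have [ab|ba] := leP a b; first exact: wlog.
  have [|db [da [hb ha hs]]] := wlog b a (ltW ba) b0 a0.
    by move: nb; rewrite orbC (andbC (a == 0)) (andbC (a == 1)).
  by exists da, db; split; rewrite // addrC (addrC a).
have le1 u : u <= 1 -> u <= Num.max 1 (2 - (a + b)) by move=> u1; rewrite le_max u1.
have [b1|b1|b1] := ltgtP b 1.
- exists (1 - a), (1 - b); split.
  + by split; rewrite ?lt0r_neq0 //; lra.
  + by split; rewrite ?lt0r_neq0 //; lra.
  + by apply: (max0D_le (s := 1 - a) (t := 1 - b)); rewrite ?le_max ?lexx ?orbT //; lra.
- have [a1|a1] := eqVneq a 1.
  + exists 2^-1, (1 - b); split.
    * by split; rewrite ?lt0r_neq0 //; lra.
    * by split; rewrite ?ltr0_neq0 //; lra.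
    * by apply: (max0D_le (s := 2^-1) (t := 0)); try apply: le1; lra.
  + exists (1 - a), (1 - b); split.
    * by split; rewrite ?subr_eq0 1?eq_sym //; lra.
    * by split; rewrite ?ltr0_neq0 //; lra.
    * by apply: (max0D_le (s := 1) (t := 0)); try apply: le1; lra.
- have [a1|a1] := eqVneq a 1.
  + exists 2^-1, 2^-1; split; try by split; rewrite ?lt0r_neq0 //; lra.
    by apply: (max0D_le (s := 2^-1) (t := 2^-1)); try apply: le1; lra.
  + have a0' : 0 < a.
      by rewrite lt_neqAle a0 andbT eq_sym; apply: contra nb => /eqP->; rewrite b1 !eqxx.
    exists (1 - a), a; split.
    * by split; rewrite ?lt0r_neq0 //; lra.
    * by split; rewrite ?lt0r_neq0 //; lra.
    * by apply: (max0D_le (s := 1 - a) (t := a)); try apply: le1; lra.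
Qed.

End BisepTerm.

Theorem corollary1 (R : realType) (au av : R) (hau : 0 <= au) (hav : 0 <= av) :
  let tau := Num.max 1 (2 - (au + av)) in
  let rate (k : nat) : R :=
    if ((au == 0) && (av == 1)) || ((au == 1) && (av == 0))
    then k%:R * ln (k%:R)
    else (k%:R) `^ tau in
  exists c C : R, 0 < c /\ 0 < C /\
    exists K : nat, forall (k n : nat) (u v : 'I_n -> R),
      (K <= k)%N ->
      power_law_profile k au u -> power_law_profile k av v ->
      c * rate k <= bisep_term k u v /\ bisep_term k u v <= C * rate k.
Proof.
move=> tau rate.
have [boundary|generic] := boolP (((au == 0) && (av == 1)) || ((au == 1) && (av == 0))).
- rewrite /rate boundary; exists 1, 3; split=> //; split=> //.
  exists 2%N => k n u v k2 hu hv; have k0 : (0 < k)%N by apply: leq_trans k2.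
  rewrite (bisep_term_power_law hu hv) (harmonic_bisep_boundary boundary k0) mul1r mulrCA.
  have /andP[lo hi] := @harmonic1_ln_bounds R k k2.
  by rewrite !ler_wpM2l ?ler0n.
- rewrite /rate (negbTE generic).
  have [da [db [[da0 da1 ada] [db0 db1 bdb] exps]]] := exists_ratio_exponents hau hav generic.
  have C0 d : 0 < 1 + `|d|^-1 :> R by rewrite (lt_le_trans ltr01) // lerDl invr_ge0.
  exists 1, ((1 + `|da|^-1) * (1 + `|db|^-1)); split=> //; split; first by rewrite mulr_gt0.
  exists 1%N => k n u v k0 hu hv; rewrite (bisep_term_power_law hu hv) mul1r.
  split; first exact: powR_le_harmonic_bisep.
  by apply: harmonic_bisep_le_powR; rewrite // le_max lexx.
Qed.
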